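(* Let $0 \leq a \leq b$. For any $t>0$ and $\lambda \in [0,+\infty)$, \[ |f_t(\lambda) - \tilde{\mathbf{1}}_{[a,b]}(\lambda)| \leq \begin{cases} s(t|\lambda - a|) & \text{if } \lambda \in [0,a)\cup\{b\},\\ s(t|\lambda-a|) + s(t|\lambda-b|) & \text{if } \lambda\in(a,b),\\ s(t|\lambda-b|) & \text{if } \lambda\in\{a\}\cup(b,+\infty), \end{cases} \] where $s:(0,+\infty)\to\mathbb{R}$ is $s(\rho) = \frac{e^{-\rho^2}}{2\sqrt\pi\,\rho}$.
   Context: For $0\le a\le b$ and $t>0$, $f_t(\lambda) = \frac{t}{\sqrt\pi}\int_a^b\exp(-t^2(\lambda-\mu)^2)\,d\mu$. The function $\tilde{\mathbf{1}}_{[a,b]}$ equals $1$ on $(a,b)$, $\frac12$ at $x=a$ and at $x=b$, and $0$ elsewhere. (When $a=b$, the cases are read with the conventions as printed.) *)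

From Stdlib Require Import Reals Lra.
From Coquelicot Require Import Coquelicot.
Open Scope R_scope.

Definition f_t (t a b lam : R) : R :=
  t / sqrt PI * RInt (fun mu => exp (- (t ^ 2 * (lam - mu) ^ 2))) a b.

Definition tilde1 (a b x : R) : R :=
  if Rlt_dec a x then
    (if Rlt_dec x b then 1 else if Req_EM_T x b then 1/2 else 0)
  else if Req_EM_T x a then 1/2
  else if Req_EM_T x b then 1/2 else 0.

Definition s (rho : R) : R := exp (- rho ^ 2) / (2 * sqrt PI * rho).

(* With [I x = int_0^x exp(-u^2) du], the function
   [I x ^ 2 + int_0^1 exp(-x^2 (1+v^2)) / (1+v^2) dv] has zero derivative, and
   at [x = 0] it equals [atan 1 = PI/4]. Both terms are nonnegative, so
   [I x <= sqrt PI / 2]; bounding [1/(1+v^2) <= 1] in the second term gives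
   [(sqrt PI/2 - I x)(sqrt PI/2 + I x) <= exp(-x^2) I x / x], whence the tail
   estimate [sqrt PI/2 - I x <= exp(-x^2)/(2x)]. After the substitution
   [u = t (mu - lam)], [f_t] is a difference of two values of [I / sqrt PI],
   and each case of the theorem reduces to this tail estimate. *)
From Stdlib Require Import Reals Lra.
From Coquelicot Require Import Coquelicot.
Open Scope R_scope.

Lemma is_derive_0_const (f : R -> R) :
  (forall x, is_derive f x 0) -> forall x, f x = f 0.
Proof.
  intros Hf x.
  assert (H : is_RInt (fun _ => 0) 0 x (minus (f x) (f 0))).
  { apply (is_RInt_derive (V:=R_CompleteNormedModule));
      intros; [apply Hf | apply continuous_const]. }
  apply (is_RInt_unique (V:=R_CompleteNormedModule)) in H.
  rewrite RInt_const in H.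
  unfold minus, plus, opp, scal in H; simpl in H; unfold mult in H; simpl in H.
  lra.
Qed.

Lemma sqrt_PI_pos : 0 < sqrt PI.
Proof. apply sqrt_lt_R0, PI_RGT_0. Qed.

Lemma sqr_half_sqrt_PI : (sqrt PI / 2) ^ 2 = PI / 4.
Proof.
  unfold Rdiv; rewrite Rpow_mult_distr, pow2_sqrt by (left; apply PI_RGT_0); field.
Qed.

Lemma one_plus_sqr_pos (v : R) : 0 < 1 + v ^ 2.
Proof. nra. Qed.

Definition gauss (u : R) : R := exp (- u ^ 2).

Definition gauss_int (x : R) : R := RInt gauss 0 x.

Lemma gauss_pos (u : R) : 0 < gauss u.
Proof. apply exp_pos. Qed.

Lemma continuous_gauss (u : R) : continuous gauss u.
Proof.
  apply (ex_derive_continuous (K:=R_AbsRing) (V:=R_NormedModule)).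
  unfold gauss; auto_derive; auto.
Qed.

Lemma ex_RInt_gauss_lin (u v a b : R) :
  ex_RInt (fun y => u * gauss (u * y + v)) a b.
Proof.
  apply (ex_RInt_continuous (V:=R_CompleteNormedModule)); intros.
  apply (ex_derive_continuous (K:=R_AbsRing) (V:=R_NormedModule)).
  unfold gauss; auto_derive; auto.
Qed.

Lemma ex_RInt_gauss (a b : R) : ex_RInt gauss a b.
Proof.
  apply (ex_RInt_continuous (V:=R_CompleteNormedModule)).
  intros; apply continuous_gauss.
Qed.

Lemma is_derive_gauss_int (x : R) : is_derive gauss_int x (gauss x).
Proof.
  apply is_derive_RInt with (a := 0).
  - apply filter_forall; intros.
    apply (RInt_correct (V:=R_CompleteNormedModule)), ex_RInt_gauss.
  - apply continuous_gauss.
Qed.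

Lemma RInt_gauss (p q : R) : RInt gauss p q = gauss_int q - gauss_int p.
Proof.
  unfold gauss_int.
  rewrite <- (RInt_Chasles (V:=R_CompleteNormedModule) gauss p 0 q)
    by apply ex_RInt_gauss.
  rewrite <- (opp_RInt_swap (V:=R_CompleteNormedModule)) by apply ex_RInt_gauss.
  unfold plus, opp; simpl; ring.
Qed.

Lemma RInt_gauss_lin (u v a b : R) :
  RInt (fun y => u * gauss (u * y + v)) a b
  = gauss_int (u * b + v) - gauss_int (u * a + v).
Proof.
  rewrite <- RInt_gauss.
  exact (RInt_comp_lin gauss u v a b (ex_RInt_gauss _ _)).
Qed.

Lemma gauss_int_0 : gauss_int 0 = 0.
Proof. unfold gauss_int; rewrite RInt_point; reflexivity. Qed.

Lemma RInt_gauss_scale (x : R) :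
  RInt (fun v => x * gauss (x * v + 0)) 0 1 = gauss_int x.
Proof.
  rewrite RInt_gauss_lin.
  replace (x * 1 + 0) with x by ring.
  replace (x * 0 + 0) with 0 by ring.
  rewrite gauss_int_0, Rminus_0_r; reflexivity.
Qed.

Lemma gauss_int_opp (x : R) : gauss_int (- x) = - gauss_int x.
Proof.
  assert (H := RInt_gauss_lin (-1) 0 0 x).
  replace (-1 * x + 0) with (- x) in H by ring.
  replace (-1 * 0 + 0) with 0 in H by ring.
  rewrite gauss_int_0, Rminus_0_r in H; rewrite <- H.
  rewrite (RInt_ext _ (fun y => -1 * gauss y)).
  - rewrite (RInt_scal (V:=R_CompleteNormedModule)) by apply ex_RInt_gauss.
    unfold scal; simpl; unfold mult, gauss_int; simpl; ring.
  - intros y _; unfold gauss; do 3 f_equal; ring.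
Qed.

Lemma gauss_int_ge0 (x : R) : 0 <= x -> 0 <= gauss_int x.
Proof.
  intros Hx; apply RInt_ge_0; auto using ex_RInt_gauss.
  intros; left; apply gauss_pos.
Qed.

Lemma gauss_int_le_mono (x y : R) : x <= y -> gauss_int x <= gauss_int y.
Proof.
  intros Hxy; rewrite <- (Rminus_0_r (gauss_int y)), <- (Rminus_0_r (gauss_int x)).
  assert (H : 0 <= RInt gauss x y).
  { apply RInt_ge_0; auto using ex_RInt_gauss. intros; left; apply gauss_pos. }
  rewrite RInt_gauss in H; lra.
Qed.

Definition defect_integrand (x v : R) : R :=
  exp (- (x ^ 2 * (1 + v ^ 2))) / (1 + v ^ 2).

Definition gauss_defect (x : R) : R := RInt (defect_integrand x) 0 1.

Lemma defect_integrand_eq (x v : R) :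
  defect_integrand x v = gauss x * gauss (x * v + 0) / (1 + v ^ 2).
Proof. unfold defect_integrand, gauss; rewrite <- exp_plus; do 3 f_equal; ring. Qed.

Lemma is_derive_defect_integrand (x v : R) :
  is_derive (fun z => defect_integrand z v) x (-2 * x * exp (- (x ^ 2 * (1 + v ^ 2)))).
Proof.
  unfold defect_integrand; auto_derive.
  - generalize (one_plus_sqr_pos v); lra.
  - simpl; field; generalize (one_plus_sqr_pos v); simpl; lra.
Qed.

Lemma Derive_defect_integrand (x v : R) :
  Derive (fun z => defect_integrand z v) x = -2 * x * exp (- (x ^ 2 * (1 + v ^ 2))).
Proof. apply is_derive_unique, is_derive_defect_integrand. Qed.

Lemma continuity_2d_Derive_defect_integrand (x v : R) :
  continuity_2d_pt (fun u w => Derive (fun z => defect_integrand z w) u) x v.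
Proof.
  apply continuity_2d_pt_ext with
    (f := fun u w => (-2 * u) * exp (- ((u * u) * (1 + w * w)))).
  { intros u w; rewrite Derive_defect_integrand; simpl; do 3 f_equal; ring. }
  apply continuity_2d_pt_mult.
  - apply continuity_2d_pt_mult;
      [apply continuity_2d_pt_const | apply continuity_2d_pt_id1].
  - apply continuity_1d_2d_pt_comp with (f := exp).
    + apply derivable_continuous_pt, derivable_pt_exp.
    + apply continuity_2d_pt_opp, continuity_2d_pt_mult.
      * apply continuity_2d_pt_mult; apply continuity_2d_pt_id1.
      * apply continuity_2d_pt_plus; [apply continuity_2d_pt_const|].
        apply continuity_2d_pt_mult; apply continuity_2d_pt_id2.
Qed.

Lemma ex_RInt_defect_integrand (x a b : R) : ex_RInt (defect_integrand x) a b.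
Proof.
  apply (ex_RInt_continuous (V:=R_CompleteNormedModule)); intros v _.
  apply (ex_derive_continuous (K:=R_AbsRing) (V:=R_NormedModule)).
  unfold defect_integrand; auto_derive; generalize (one_plus_sqr_pos v); lra.
Qed.

Lemma is_derive_gauss_defect (x : R) :
  is_derive gauss_defect x (-2 * gauss x * gauss_int x).
Proof.
  rewrite <- RInt_gauss_scale.
  rewrite <- (RInt_scal (V:=R_CompleteNormedModule)) by apply ex_RInt_gauss_lin.
  rewrite (RInt_ext _ (fun v => Derive (fun z => defect_integrand z v) x)).
  - apply (is_derive_RInt_param defect_integrand 0 1 x).
    + apply filter_forall; intros y v _; eexists; apply is_derive_defect_integrand.
    + intros; apply continuity_2d_Derive_defect_integrand.
    + apply filter_forall; intros; apply ex_RInt_defect_integrand.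
  - intros v _; rewrite Derive_defect_integrand.
    unfold gauss, scal; simpl; unfold mult; simpl.
    replace (- (x * (x * 1) * (1 + v * (v * 1))))
      with (- (x * (x * 1)) + - ((x * v + 0) * ((x * v + 0) * 1))) by ring.
    rewrite exp_plus; ring.
Qed.

Lemma gauss_defect_0 : gauss_defect 0 = PI / 4.
Proof.
  unfold gauss_defect.
  rewrite (RInt_ext _ (fun v => / (1 + v ^ 2))).
  - rewrite (is_RInt_unique (V:=R_CompleteNormedModule) _ _ _ (minus (atan 1) (atan 0))).
    + rewrite atan_1, atan_0; unfold minus, plus, opp; simpl; lra.
    + apply (is_RInt_derive (V:=R_CompleteNormedModule) atan); intros v _.
      * apply is_derive_Reals, derivable_pt_lim_atan.
      * apply (ex_derive_continuous (K:=R_AbsRing) (V:=R_NormedModule)).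
        auto_derive; generalize (one_plus_sqr_pos v); simpl; lra.
  - intros v _; unfold defect_integrand.
    replace (- (0 ^ 2 * (1 + v ^ 2))) with 0 by ring.
    rewrite exp_0; apply Rmult_1_l.
Qed.

Lemma gauss_int_sqr_add_defect (x : R) : gauss_int x ^ 2 + gauss_defect x = PI / 4.
Proof.
  transitivity (gauss_int 0 ^ 2 + gauss_defect 0).
  - apply (is_derive_0_const (fun x => gauss_int x ^ 2 + gauss_defect x)); intros y.
    replace 0 with (INR 2 * gauss y * gauss_int y ^ Nat.pred 2 + -2 * gauss y * gauss_int y)
      by (simpl; ring).
    apply (is_derive_plus (K:=R_AbsRing) (V:=R_NormedModule)).
    + apply is_derive_pow, is_derive_gauss_int.
    + apply is_derive_gauss_defect.
  - rewrite gauss_int_0, gauss_defect_0; ring.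
Qed.

Lemma gauss_defect_ge0 (x : R) : 0 <= gauss_defect x.
Proof.
  apply RInt_ge_0; [lra | apply ex_RInt_defect_integrand |].
  intros v _; left; apply Rdiv_lt_0_compat; [apply exp_pos | apply one_plus_sqr_pos].
Qed.

Lemma gauss_defect_le (x : R) : 0 < x -> gauss_defect x <= gauss x / x * gauss_int x.
Proof.
  intros Hx.
  rewrite <- RInt_gauss_scale.
  rewrite <- (RInt_scal (V:=R_CompleteNormedModule)) by apply ex_RInt_gauss_lin.
  apply RInt_le; [lra | apply ex_RInt_defect_integrand | |].
  - apply (ex_RInt_scal (V:=R_CompleteNormedModule)), ex_RInt_gauss_lin.
  - intros v Hv; rewrite defect_integrand_eq.
    unfold scal; simpl; unfold mult; simpl.
    assert (Hg := Rmult_lt_0_compat _ _ (gauss_pos x) (gauss_pos (x * v + 0))).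
    apply Rle_trans with (gauss x * gauss (x * v + 0) / 1).
    + apply Rmult_le_compat_l; [lra|].
      apply Rinv_le_contravar; [lra | nra].
    + right; field; lra.
Qed.

Lemma gauss_int_le (x : R) : 0 <= x -> gauss_int x <= sqrt PI / 2.
Proof.
  intros Hx.
  generalize sqr_half_sqrt_PI (gauss_int_sqr_add_defect x) (gauss_defect_ge0 x) (gauss_int_ge0 x Hx)
    sqrt_PI_pos; nra.
Qed.

Lemma gauss_tail_le (x : R) : 0 < x -> sqrt PI / 2 - gauss_int x <= gauss x / (2 * x).
Proof.
  intros Hx.
  set (Q := sqrt PI / 2); set (J := gauss_int x).
  assert (HJ : 0 <= J <= Q) by (split; [apply gauss_int_ge0 | apply gauss_int_le]; lra).
  assert (Hdefect : (Q - J) * (Q + J) <= gauss x / x * J).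
  { generalize sqr_half_sqrt_PI (gauss_int_sqr_add_defect x) (gauss_defect_le x Hx).
    fold Q J; intros; nra. }
  assert (HQ : 0 < Q) by (generalize sqrt_PI_pos; unfold Q; lra).
  assert (Hg : 0 <= gauss x / x) by (apply Rlt_le, Rdiv_lt_0_compat; [apply gauss_pos | lra]).
  apply Rmult_le_reg_r with (Q + J); [lra|].
  replace (gauss x / (2 * x) * (Q + J)) with (gauss x / x * ((Q + J) / 2)) by (field; lra).
  apply Rle_trans with (1 := Hdefect), Rmult_le_compat_l; lra.
Qed.

Lemma gauss_int_half_bound (x : R) : 0 < x -> 0 <= 1 / 2 - gauss_int x / sqrt PI <= s x.
Proof.
  intros Hx; generalize sqrt_PI_pos (gauss_int_le x (Rlt_le _ _ Hx)) (gauss_tail_le x Hx).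
  intros HQ Hle Htail.
  replace (1 / 2 - gauss_int x / sqrt PI) with ((sqrt PI / 2 - gauss_int x) / sqrt PI)
    by (field; lra).
  replace (s x) with (gauss x / (2 * x) / sqrt PI) by (unfold s, gauss; field; lra).
  split; [apply Rdiv_le_0_compat | apply Rmult_le_compat_r]; auto with real; lra.
Qed.

Definition half_erf (x : R) : R := gauss_int x / sqrt PI.

Lemma half_erf_0 : half_erf 0 = 0.
Proof. unfold half_erf; rewrite gauss_int_0; unfold Rdiv; ring. Qed.

Lemma half_erf_opp (x : R) : half_erf (- x) = - half_erf x.
Proof. unfold half_erf; rewrite gauss_int_opp; unfold Rdiv; ring. Qed.

Lemma half_erf_le_mono (x y : R) : x <= y -> half_erf x <= half_erf y.
Proof.
  intros Hxy; apply Rmult_le_compat_r.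
  - apply Rlt_le, Rinv_0_lt_compat, sqrt_PI_pos.
  - apply gauss_int_le_mono, Hxy.
Qed.

Lemma half_erf_dist_half (x : R) : 0 < x -> Rabs (half_erf x - 1 / 2) <= s x.
Proof.
  intros Hx; destruct (gauss_int_half_bound x Hx).
  unfold half_erf; rewrite Rabs_left1; lra.
Qed.

Lemma half_erf_dist (x y : R) : 0 < x <= y -> Rabs (half_erf y - half_erf x) <= s x.
Proof.
  intros [Hx Hxy].
  destruct (gauss_int_half_bound x Hx), (gauss_int_half_bound y (Rlt_le_trans _ _ _ Hx Hxy)).
  generalize (half_erf_le_mono x y Hxy); unfold half_erf; intros.
  rewrite Rabs_pos_eq; lra.
Qed.

Lemma half_erf_dist_opp (x y : R) : 0 < x <= y ->
  Rabs (half_erf (- x) - half_erf (- y)) <= s x.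
Proof.
  intros Hxy; rewrite !half_erf_opp, Rabs_minus_sym.
  replace (- half_erf y - - half_erf x) with (- (half_erf y - half_erf x)) by ring.
  rewrite Rabs_Ropp; apply half_erf_dist, Hxy.
Qed.

Lemma f_t_half_erf (t a b lam : R) : 0 < t ->
  f_t t a b lam = half_erf (t * (lam - a)) - half_erf (t * (lam - b)).
Proof.
  intros Ht; unfold f_t.
  rewrite (RInt_ext _ (fun mu => / t * (t * gauss (t * mu + - t * lam)))).
  - rewrite (RInt_scal (V:=R_CompleteNormedModule)) by apply ex_RInt_gauss_lin.
    rewrite RInt_gauss_lin.
    replace (t * (lam - a)) with (- (t * a + - t * lam)) by ring.
    replace (t * (lam - b)) with (- (t * b + - t * lam)) by ring.
    rewrite !half_erf_opp; unfold half_erf, scal; simpl; unfold mult; simpl.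
    field; split; [generalize sqrt_PI_pos |]; lra.
  - intros mu _; unfold gauss; field_simplify; [| lra].
    do 2 f_equal; ring.
Qed.

Ltac eval_tilde1 :=
  unfold tilde1; repeat destruct Rlt_dec; repeat destruct Req_EM_T; lra.

Section Ft_bounds.

Variables (t a b : R).
Hypothesis Ht : 0 < t.

Lemma f_t_bound_below (lam : R) : a <= b -> lam < a ->
  Rabs (f_t t a b lam - tilde1 a b lam) <= s (t * Rabs (lam - a)).
Proof.
  intros Hab Hlam.
  replace (tilde1 a b lam) with 0 by eval_tilde1.
  rewrite f_t_half_erf, Rminus_0_r, (Rabs_left (lam - a)) by lra.
  replace (t * (lam - a)) with (- (t * - (lam - a))) by ring.
  replace (t * (lam - b)) with (- (t * - (lam - b))) by ring.
  apply half_erf_dist_opp; split; [nra | apply Rmult_le_compat_l; lra].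
Qed.

Lemma f_t_bound_above (lam : R) : a <= b -> b < lam ->
  Rabs (f_t t a b lam - tilde1 a b lam) <= s (t * Rabs (lam - b)).
Proof.
  intros Hab Hlam.
  replace (tilde1 a b lam) with 0 by eval_tilde1.
  rewrite f_t_half_erf, Rminus_0_r, (Rabs_pos_eq (lam - b)) by lra.
  apply half_erf_dist; split; [nra | apply Rmult_le_compat_l; lra].
Qed.

Lemma f_t_bound_inside (lam : R) : a < lam < b ->
  Rabs (f_t t a b lam - tilde1 a b lam)
  <= s (t * Rabs (lam - a)) + s (t * Rabs (lam - b)).
Proof.
  intros Hlam.
  replace (tilde1 a b lam) with 1 by eval_tilde1.
  rewrite f_t_half_erf, (Rabs_pos_eq (lam - a)), (Rabs_left (lam - b)) by lra.
  replace (t * (lam - b)) with (- (t * - (lam - b))) by ring.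
  rewrite half_erf_opp.
  replace (half_erf (t * (lam - a)) - - half_erf (t * - (lam - b)) - 1)
    with ((half_erf (t * (lam - a)) - 1 / 2) + (half_erf (t * - (lam - b)) - 1 / 2))
    by field.
  eapply Rle_trans; [apply Rabs_triang |].
  apply Rplus_le_compat; apply half_erf_dist_half; nra.
Qed.

Lemma f_t_bound_at_b : a < b ->
  Rabs (f_t t a b b - tilde1 a b b) <= s (t * Rabs (b - a)).
Proof.
  intros Hab.
  replace (tilde1 a b b) with (1 / 2) by eval_tilde1.
  rewrite f_t_half_erf, Rminus_diag, Rmult_0_r, half_erf_0, Rminus_0_r,
    (Rabs_pos_eq (b - a)) by lra.
  apply half_erf_dist_half; nra.
Qed.

Lemma f_t_bound_at_a : a < b ->
  Rabs (f_t t a b a - tilde1 a b a) <= s (t * Rabs (a - b)).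
Proof.
  intros Hab.
  replace (tilde1 a b a) with (1 / 2) by eval_tilde1.
  rewrite f_t_half_erf, Rminus_diag, Rmult_0_r, half_erf_0, (Rabs_left (a - b)) by lra.
  replace (t * (a - b)) with (- (t * - (a - b))) by ring.
  rewrite half_erf_opp, Rminus_0_l, Ropp_involutive.
  apply half_erf_dist_half; nra.
Qed.

End Ft_bounds.

Theorem lemma3p3 (a b : R) (Ha : 0 <= a) (Hab : a <= b) (t lam : R)
  (Ht : 0 < t) (Hlam : 0 <= lam) :
  ((lam < a \/ lam = b) -> 0 < t * Rabs (lam - a) ->
     Rabs (f_t t a b lam - tilde1 a b lam) <= s (t * Rabs (lam - a))) /\
  ((a < lam < b) ->
     Rabs (f_t t a b lam - tilde1 a b lam)
       <= s (t * Rabs (lam - a)) + s (t * Rabs (lam - b))) /\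
  ((lam = a \/ b < lam) -> 0 < t * Rabs (lam - b) ->
     Rabs (f_t t a b lam - tilde1 a b lam) <= s (t * Rabs (lam - b))).
Proof.
  assert (Hne : forall x y, 0 < t * Rabs (x - y) -> x <> y).
  { intros x y Hpos ->; rewrite Rminus_diag, Rabs_R0, Rmult_0_r in Hpos; lra. }
  split; [| split].
  - intros [Hlt | ->] Hpos.
    + apply f_t_bound_below; assumption.
    + apply Hne in Hpos; apply f_t_bound_at_b; lra.
  - apply f_t_bound_inside; assumption.
  - intros [-> | Hgt] Hpos.
    + apply Hne in Hpos; apply f_t_bound_at_a; lra.
    + apply f_t_bound_above; assumption.
Qed.
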